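(* Let $X$ be a Type I space, written as $X=\bigcup_{\alpha<\omega_1}U_\alpha$ as in the definition of Type I, and let $h_t:X\to X$, $t\in[0,1]$, be an isotopy of homeomorphisms. Then $$\Big\{\alpha<\omega_1 \;:\; h_t\Big(\bigcup_{\beta<\alpha}U_\beta\Big)=\bigcup_{\beta<\alpha}U_\beta \text{ for all } t\in[0,1]\Big\}$$ is a closed unbounded subset of $\omega_1$.
   Context: A topological space $X$ is of Type I if it is the union of an $\omega_1$-sequence $\langle U_\alpha:\alpha<\omega_1\rangle$ of open subsets such that whenever $\alpha<\beta<\omega_1$ we have $\overline{U_\alpha}\subset U_\beta$ and $U_\alpha$ is Lindelöf. An isotopy of homeomorphisms of $X$ is a continuous map $H:X\times[0,1]\to X$ such that each $h_t=H(\cdot,t)$ is a homeomorphism of $X$. *)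

From Stdlib Require Import Reals.
Open Scope R_scope.

Record topology (X : Type) := Topology {
  is_open : (X -> Prop) -> Prop;
  open_full : is_open (fun _ => True);
  open_inter : forall U V, is_open U -> is_open V -> is_open (fun x => U x /\ V x);
  open_union : forall F : (X -> Prop) -> Prop,
      (forall V, F V -> is_open V) -> is_open (fun x => exists V, F V /\ V x)
}.
Arguments is_open {X} _ _.

Definition closure {X} (T : topology X) (A : X -> Prop) (x : X) : Prop :=
  forall V, is_open T V -> V x -> exists y, V y /\ A y.

(* A subset A is Lindelof (as a subspace): every cover of A by open sets of X
   has a countable subcover (empty sets allowed as padding). *)
Definition lindelof {X} (T : topology X) (A : X -> Prop) : Prop :=
  forall F : (X -> Prop) -> Prop,
    (forall V, F V -> is_open T V) ->
    (forall x, A x -> exists V, F V /\ V x) ->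
    exists g : nat -> (X -> Prop),
      (forall n, F (g n) \/ (forall x, ~ g n x)) /\
      (forall x, A x -> exists n, g n x).

Definition continuous {X Y} (TX : topology X) (TY : topology Y) (f : X -> Y) : Prop :=
  forall V, is_open TY V -> is_open TX (fun x => V (f x)).

Definition homeomorphism {X} (T : topology X) (h : X -> X) : Prop :=
  exists g : X -> X,
    (forall x, g (h x) = x) /\ (forall y, h (g y) = y) /\
    continuous T T h /\ continuous T T g.

(* Continuity of H : X x [0,1] -> X for the product topology
   (Euclidean topology on [0,1]), written out pointwise. *)
Definition continuous_on_XI {X} (T : topology X) (H : X -> R -> X) : Prop :=
  forall (V : X -> Prop) (x : X) (t : R),
    is_open T V -> 0 <= t <= 1 -> V (H x t) ->
    exists U delta, is_open T U /\ U x /\ 0 < delta /\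
      forall y s, U y -> 0 <= s <= 1 -> Rabs (s - t) < delta -> V (H y s).

Definition isotopy {X} (T : topology X) (H : X -> R -> X) : Prop :=
  continuous_on_XI T H /\
  forall t, 0 <= t <= 1 -> homeomorphism T (fun x => H x t).

Definition is_omega1 (W : Type) (lt : W -> W -> Prop) : Prop :=
  (forall a b c, lt a b -> lt b c -> lt a c) /\
  (forall a b, lt a b \/ a = b \/ lt b a) /\
  well_founded lt /\
  (forall a, exists f : nat -> W, forall b, lt b a -> exists n, f n = b) /\
  (forall f : nat -> W, exists a, forall n, f n <> a).

Definition type_I {X} (T : topology X) (W : Type) (lt : W -> W -> Prop)
    (U : W -> X -> Prop) : Prop :=
  (forall a, is_open T (U a)) /\
  (forall x, exists a, U a x) /\
  (forall a b, lt a b -> forall x, closure T (U a) x -> U b x) /\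
  (forall a, lindelof T (U a)).

Definition unbounded {W} (lt : W -> W -> Prop) (C : W -> Prop) : Prop :=
  forall a, exists b, C b /\ (a = b \/ lt a b).

Definition limit_point_of {W} (lt : W -> W -> Prop) (C : W -> Prop) (a : W) : Prop :=
  (exists b, C b /\ lt b a) /\
  (forall c, lt c a -> exists b, C b /\ lt c b /\ lt b a).

Definition club {W} (lt : W -> W -> Prop) (C : W -> Prop) : Prop :=
  (forall a, limit_point_of lt C a -> C a) /\ unbounded lt C.

Definition image_eq {X} (h : X -> X) (A : X -> Prop) : Prop :=
  (forall x, A x -> A (h x)) /\ (forall y, A y -> exists x, A x /\ h x = y).

From Stdlib Require Import Reals Lra Lia Classical ClassicalEpsilon
  FunctionalExtensionality PropExtensionality Cantor.
Open Scope R_scope.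

(* Write V_a for the initial union of the U_b, b < a.
   Closedness: if a is a limit of ordinals c with h_t(V_c) = V_c, then V_a is
   the increasing union of those V_c, hence h_t(V_a) = V_a.
   Unboundedness is a closing-off argument.  Fix a countable dense set of
   times t_k in [0,1].  Since every U_a is Lindelof and every countable subset
   of omega_1 is bounded, for each a there is b > a such that h_{t_k} and
   h_{t_k}^{-1} map U_a into U_b for all k.  Iterating from a_0 and taking the
   supremum s of the sequence (a_n), V_s is the union of the U_{a_n}.  By
   continuity of H in t, h_t(x) for x in U_{a_n} lies in the closure of
   U_{a_{n+1}}, hence in U_{a_{n+2}}; and for y in V_s, the point
   x = h_t^{-1}(y) satisfies h_{t_k}(x) in some U_{a_n} for a t_k near t, so
   x = h_{t_k}^{-1}(h_{t_k}(x)) is in U_{a_{n+1}}.  So h_t(V_s) = V_s. *)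

Lemma well_founded_minimal (W : Type) (lt : W -> W -> Prop) :
  well_founded lt -> forall (Q : W -> Prop) a, Q a ->
  exists m, Q m /\ forall c, lt c m -> ~ Q c.
Proof.
  intros wf Q a. induction a as [a IH] using (well_founded_ind wf). intros Qa.
  destruct (classic (exists c, lt c a /\ Q c)) as [[c [Hc Qc]] | Hnone].
  - exact (IH c Hc Qc).
  - exists a. split; [exact Qa |]. intros c Hc Qc. apply Hnone. eauto.
Qed.

Section Omega1.

Variables (W : Type) (lt : W -> W -> Prop).
Hypothesis om : is_omega1 W lt.

(* Every countable subset of omega_1 has a strict upper bound: otherwise the
   countable union of the initial segments below f n would exhaust omega_1. *)
Lemma countable_bounded (f : nat -> W) : exists b, forall n, lt (f n) b.
Proof.
  destruct om as [_ [Htot [_ [Hcnt Hunc]]]].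
  destruct (choice (fun n e => forall b, lt b (f n) -> exists k, e k = b)
              (fun n => Hcnt (f n))) as [e He].
  set (g := fun k => let '(n, m) := Cantor.of_nat k in
                     match m with O => f n | S m' => e n m' end).
  destruct (Hunc g) as [a Ha]. exists a. intros n.
  destruct (Htot (f n) a) as [Hlt | [Heq | Hgt]]; [exact Hlt | exfalso ..].
  - apply (Ha (Cantor.to_nat (n, O))). unfold g. rewrite Cantor.cancel_of_to. auto.
  - destruct (He n a Hgt) as [k Hk].
    apply (Ha (Cantor.to_nat (n, S k))). unfold g. rewrite Cantor.cancel_of_to. auto.
Qed.

Lemma bounded_family (P : nat -> W -> Prop) :
  (forall n b b', P n b -> lt b b' -> P n b') ->
  (forall n, exists b, P n b) -> exists b, forall n, P n b.
Proof.
  intros Hup Hex.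
  destruct (choice P Hex) as [c Hc].
  destruct (countable_bounded c) as [b Hb]. eauto.
Qed.

Lemma upper_bound2 (x y : W) : exists b, lt x b /\ lt y b.
Proof.
  destruct (countable_bounded (fun n => match n with O => x | _ => y end)) as [b Hb].
  exists b. exact (conj (Hb O) (Hb 1%nat)).
Qed.

Lemma sequence_supremum (sq : nat -> W) :
  exists s, (forall n, lt (sq n) s) /\
            (forall b, lt b s -> exists n, b = sq n \/ lt b (sq n)).
Proof.
  destruct om as [_ [Htot [Hwf _]]].
  destruct (countable_bounded sq) as [s0 Hs0].
  destruct (well_founded_minimal W lt Hwf (fun c => forall n, lt (sq n) c) s0 Hs0)
    as [s [Hs Hmin]].
  exists s. split; [exact Hs |]. intros b Hb.
  destruct (not_all_ex_not _ _ (Hmin b Hb)) as [n Hn].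
  exists n. destruct (Htot (sq n) b) as [? | [-> | ?]]; tauto.
Qed.

End Omega1.

(* A countable dense set of times in [0,1]: the numbers min(1, p/(m+1)),
   enumerated through the Cantor pairing. *)
Definition grid (k : nat) : R :=
  Rmin 1 (INR (fst (Cantor.of_nat k)) / INR (S (snd (Cantor.of_nat k)))).

Lemma grid_range (k : nat) : 0 <= grid k <= 1.
Proof.
  unfold grid. split; [| apply Rmin_l].
  apply Rmin_glb; [lra |]. unfold Rdiv.
  apply Rmult_le_pos; [apply pos_INR |].
  left. apply Rinv_0_lt_compat, lt_0_INR. lia.
Qed.

Lemma nat_floor (x : R) : 0 <= x -> exists p : nat, INR p <= x < INR p + 1.
Proof.
  intros Hx. destruct (INR_unbounded x) as [N HN].
  induction N as [| N IH].
  - simpl in HN. lra.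
  - destruct (Rlt_le_dec x (INR N)) as [Hlt | Hge]; auto.
    exists N. rewrite S_INR in HN. lra.
Qed.

(* Every t in [0,1] is approximated by some p/(m+1) <= t with 1/(m+1) < d. *)
Lemma grid_dense (t d : R) : 0 <= t <= 1 -> 0 < d -> exists k, Rabs (grid k - t) < d.
Proof.
  intros Ht Hd.
  destruct (INR_unbounded (/ d)) as [m Hm].
  assert (Hm0 : 0 < INR (S m)) by (apply lt_0_INR; lia).
  assert (Hmm : INR m < INR (S m)) by (apply lt_INR; lia).
  destruct (nat_floor (t * INR (S m))) as [p Hp]; [apply Rmult_le_pos; lra |].
  exists (Cantor.to_nat (p, m)).
  unfold grid. rewrite Cantor.cancel_of_to. simpl fst; simpl snd.
  assert (Hbelow : INR p / INR (S m) <= t).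
  { apply (Rmult_le_reg_r (INR (S m))); auto.
    unfold Rdiv. rewrite Rmult_assoc, Rinv_l; lra. }
  assert (Hgap : t - INR p / INR (S m) < / INR (S m)).
  { apply (Rmult_lt_reg_r (INR (S m))); auto. unfold Rdiv.
    rewrite Rmult_minus_distr_r, Rmult_assoc, !Rinv_l by lra. lra. }
  assert (Hstep : / INR (S m) < d).
  { assert (0 < / d) by (apply Rinv_0_lt_compat; lra).
    rewrite <- (Rinv_inv d). apply Rinv_lt_contravar; [apply Rmult_lt_0_compat |]; lra. }
  rewrite Rmin_right by lra. rewrite Rabs_left1 by lra. lra.
Qed.

Section Isotopy.

Variables (X : Type) (T : topology X) (H : X -> R -> X).
Hypothesis iso : isotopy T H.

Lemma isotopy_grid_approx (V : X -> Prop) (x : X) (t : R) :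
  is_open T V -> 0 <= t <= 1 -> V (H x t) -> exists k, V (H x (grid k)).
Proof.
  intros HV Ht Hx.
  destruct (proj1 iso V x t HV Ht Hx) as [O [d [_ [Ox [Hd Hnear]]]]].
  destruct (grid_dense t d Ht Hd) as [k Hk].
  exists k. apply Hnear; auto using grid_range.
Qed.

Lemma isotopy_grid_closure (A : X -> Prop) (x : X) (t : R) :
  0 <= t <= 1 -> (forall k, A (H x (grid k))) -> closure T A (H x t).
Proof.
  intros Ht HA V HV Hx.
  destruct (isotopy_grid_approx V x t HV Ht Hx) as [k Hk]. eauto.
Qed.

Lemma isotopy_inverse : exists G : R -> X -> X, forall t, 0 <= t <= 1 ->
  (forall x, G t (H x t) = x) /\ (forall y, H (G t y) t = y) /\ continuous T T (G t).
Proof.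
  apply (choice (fun t g => 0 <= t <= 1 ->
    (forall x, g (H x t) = x) /\ (forall y, H (g y) t = y) /\ continuous T T g)).
  intros t.
  destruct (classic (0 <= t <= 1)) as [Ht | Ht].
  - destruct (proj2 iso t Ht) as [g [Hgh [Hhg [_ Hg]]]]. exists g. auto.
  - exists (fun x => x). tauto.
Qed.

End Isotopy.

Definition initial_union {X W} (lt : W -> W -> Prop) (U : W -> X -> Prop)
    (a : W) (x : X) : Prop :=
  exists b, lt b a /\ U b x.

Section TypeI.

Variables (X : Type) (T : topology X) (W : Type) (lt : W -> W -> Prop)
  (U : W -> X -> Prop).
Hypotheses (om : is_omega1 W lt) (ty : type_I T W lt U).

Lemma U_mono (a b : W) (x : X) : lt a b -> U a x -> U b x.
Proof.
  intros Hab Hx. apply (proj1 (proj2 (proj2 ty)) a b Hab). intros V _ HV. eauto.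
Qed.

Lemma initial_union_mono (a b : W) (x : X) :
  lt a b -> initial_union lt U a x -> initial_union lt U b x.
Proof.
  intros Hab [c [Hc Hx]]. exists c. split; [exact (proj1 om c a b Hc Hab) | exact Hx].
Qed.

Lemma initial_union_open (a : W) : is_open T (initial_union lt U a).
Proof.
  replace (initial_union lt U a)
    with (fun x => exists V, (fun V => exists b, lt b a /\ V = U b) V /\ V x).
  - apply open_union. intros V [b [_ ->]]. apply ty.
  - apply functional_extensionality. intros x. apply propositional_extensionality.
    split.
    + intros [V [[b [Hb ->]] Hx]]. exists b. auto.
    + intros [b [Hb Hx]]. exists (U b). eauto.
Qed.

(* A continuous map sends each U_a into some U_b: cover the Lindelof set U_a
   by the preimages of the U_c and bound a countable subcover. *)
Lemma continuous_image_bounded (f : X -> X) :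
  continuous T T f -> forall a, exists b, forall x, U a x -> U b (f x).
Proof.
  intros Hf a.
  pose proof ty as [Hop [Hcov [_ Hlin]]].
  destruct (Hlin a (fun V => exists c, V = fun x => U c (f x))) as [g [Hg Hsub]].
  - intros V [c ->]. apply Hf, Hop.
  - intros x _. destruct (Hcov (f x)) as [c Hc]. exists (fun x => U c (f x)). eauto.
  - destruct (bounded_family W lt om (fun n b => forall x, g n x -> U b (f x)))
      as [b Hb].
    + intros n b b' Hn Hbb' x Hx. exact (U_mono b b' _ Hbb' (Hn x Hx)).
    + intros n. destruct (Hg n) as [[c ->] | Hempty].
      * exists c. auto.
      * exists a. intros x Hx. destruct (Hempty x Hx).
    + exists b. intros x Hx. destruct (Hsub x Hx) as [n Hn]. exact (Hb n x Hn).
Qed.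

Lemma closing_step (fs : nat -> X -> X) :
  (forall n, continuous T T (fs n)) ->
  forall a, exists b, lt a b /\ forall n x, U a x -> U b (fs n x).
Proof.
  intros Hfs a.
  destruct (bounded_family W lt om (fun n b => forall x, U a x -> U b (fs n x)))
    as [b Hb].
  - intros n b b' Hn Hbb' x Hx. exact (U_mono b b' _ Hbb' (Hn x Hx)).
  - intros n. exact (continuous_image_bounded (fs n) (Hfs n) a).
  - destruct (upper_bound2 W lt om a b) as [b' [Hab' Hbb']].
    exists b'. split; [exact Hab' |]. intros n x Hx. exact (U_mono b b' _ Hbb' (Hb n x Hx)).
Qed.

Lemma initial_union_supremum (sq : nat -> W) (s : W) :
  (forall b, lt b s -> exists n, b = sq n \/ lt b (sq n)) ->
  forall x, initial_union lt U s x -> exists n, U (sq n) x.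
Proof.
  intros Hsup x [b [Hb Hx]].
  destruct (Hsup b Hb) as [n [-> | Hlt]]; exists n; [exact Hx | exact (U_mono b _ x Hlt Hx)].
Qed.

(* Invariance of V_a passes to limits: V_a is the union of the V_b, b < a. *)
Lemma image_eq_limit (f : X -> X) (a : W) :
  (forall c, lt c a -> exists b, lt c b /\ lt b a /\ image_eq f (initial_union lt U b)) ->
  image_eq f (initial_union lt U a).
Proof.
  intros Hlim. split.
  - intros x [c [Hc Hx]].
    destruct (Hlim c Hc) as [b [Hcb [Hba [Hinto _]]]].
    apply (initial_union_mono b a _ Hba), Hinto. exists c. auto.
  - intros y [c [Hc Hy]].
    destruct (Hlim c Hc) as [b [Hcb [Hba [_ Honto]]]].
    destruct (Honto y) as [x [Hx Hxy]]; [exists c; auto |].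
    exists x. split; [exact (initial_union_mono b a _ Hba Hx) | exact Hxy].
Qed.

Variable H : X -> R -> X.
Hypothesis iso : isotopy T H.
Variable G : R -> X -> X.
Hypothesis HG : forall t, 0 <= t <= 1 ->
  (forall x, G t (H x t) = x) /\ (forall y, H (G t y) t = y) /\ continuous T T (G t).

Definition closes_off (a b : W) : Prop :=
  lt a b /\ forall k x, U a x -> U b (H x (grid k)) /\ U b (G (grid k) x).

Lemma closes_off_exists (a : W) : exists b, closes_off a b.
Proof.
  destruct (closing_step (fun k x => H x (grid k))) with (a := a) as [b1 [Hab1 Hb1]].
  { intros k. destruct (proj2 iso _ (grid_range k)) as [g [_ [_ [Hc _]]]]. exact Hc. }
  destruct (closing_step (fun k => G (grid k))) with (a := a) as [b2 [_ Hb2]].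
  { intros k. apply (HG _ (grid_range k)). }
  destruct (upper_bound2 W lt om b1 b2) as [b [Hb1b Hb2b]].
  exists b. split; [exact (proj1 om a b1 b Hab1 Hb1b) |].
  intros k x Hx. split.
  - exact (U_mono b1 b _ Hb1b (Hb1 k x Hx)).
  - exact (U_mono b2 b _ Hb2b (Hb2 k x Hx)).
Qed.

Lemma closed_off_supremum_invariant (sq : nat -> W) (s : W) :
  (forall n, closes_off (sq n) (sq (S n))) ->
  (forall n, lt (sq n) s) ->
  (forall b, lt b s -> exists n, b = sq n \/ lt b (sq n)) ->
  forall t, 0 <= t <= 1 -> image_eq (fun x => H x t) (initial_union lt U s).
Proof.
  intros Hcl Hbound Hsup t Ht. split.
  - intros x Hx. destruct (initial_union_supremum sq s Hsup x Hx) as [n Hn].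
    assert (Hcls : closure T (U (sq (S n))) (H x t)).
    { apply (isotopy_grid_closure X T H iso _ _ _ Ht). intros k.
      exact (proj1 (proj2 (Hcl n) k x Hn)). }
    exists (sq (S (S n))). split; [apply Hbound |].
    exact (proj1 (proj2 (proj2 ty)) _ _ (proj1 (Hcl (S n))) _ Hcls).
  - intros y Hy. destruct (HG t Ht) as [_ [HGt _]].
    exists (G t y). split; [| apply HGt].
    rewrite <- (HGt y) in Hy.
    destruct (isotopy_grid_approx X T H iso _ _ _ (initial_union_open s) Ht Hy)
      as [k Hk].
    destruct (initial_union_supremum sq s Hsup _ Hk) as [n Hn].
    pose proof (proj2 (proj2 (Hcl n) k _ Hn)) as Hback.
    rewrite (proj1 (HG _ (grid_range k))) in Hback.
    exists (sq (S n)). auto.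
Qed.

Lemma invariant_above (a0 : W) : exists s, lt a0 s /\
  forall t, 0 <= t <= 1 -> image_eq (fun x => H x t) (initial_union lt U s).
Proof.
  destruct (choice closes_off closes_off_exists) as [next Hnext].
  set (sq := fun n => Nat.iter n next a0).
  destruct (sequence_supremum W lt om sq) as [s [Hbound Hsup]].
  exists s. split; [exact (Hbound O) |].
  apply (closed_off_supremum_invariant sq); [| exact Hbound | exact Hsup].
  intros n. exact (Hnext (sq n)).
Qed.

End TypeI.

Theorem corollary2p2 (X : Type) (T : topology X) (W : Type) (lt : W -> W -> Prop)
  (U : W -> X -> Prop) (H : X -> R -> X) :
  is_omega1 W lt -> type_I T W lt U -> isotopy T H ->
  club lt (fun a => forall t, 0 <= t <= 1 ->
             image_eq (fun x => H x t) (fun x => exists b, lt b a /\ U b x)).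
Proof.
  intros om ty iso.
  change (fun x => exists b, lt b ?a /\ U b x) with (initial_union lt U a).
  split.
  - intros a [_ Hlim] t Ht. apply (image_eq_limit X W lt U om).
    intros c Hc. destruct (Hlim c Hc) as [b [Cb [Hcb Hba]]]. exists b. auto.
  - intros a0. destruct (isotopy_inverse X T H iso) as [G HG].
    destruct (invariant_above X T W lt U om ty H iso G HG a0) as [s [Hs Hinv]].
    exists s. auto.
Qed.
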